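(* Let $B$ be a finite simplicial complex and $a$ a simplicial $1$-cochain on $B$ with values $\pm1$ such that $\mathcal{F}(da)$ is a cocycle. Then the consistent collection of framed small necklaces over the $2$-skeleton of $B$ determined by $a$ (the small symmetric triangulated circle bundle over the $2$-skeleton) extends uniquely to a consistent collection of framed small necklaces over the $3$-skeleton of $B$.
   Context: A necklace over a simplex $\sigma$ is a cyclic word whose beads are colored by the vertices of $\sigma$; for a face $\tau\subset\sigma$ the necklace of $\tau$ is obtained by deleting beads whose colors are not in $\tau$, and a collection of necklaces over the simplices of a complex is consistent if it satisfies this for all face inclusions (with compatible inclusion morphisms). A small necklace has exactly two beads of each color and is invariant under rotation by half its length; framed means one bead of each color is bold, and consistency requires bold beads to map to bold beads. The collection determined by $a$: on an edge $[i,j]$ the framed necklace $ijij$ has the bead after the bold $i$ equal to the bold $j$ iff $a([i,j])=+1$; on each triangle it is the unique framed small necklace restricting to these edge necklaces. $d$ is the simplicial coboundary and $\mathcal{F}(3)=\mathcal{F}(-1)=1/4$, $\mathcal{F}(-3)=\mathcal{F}(1)=-1/4$ applied valuewise. *)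

From mathcomp Require Import all_boot all_order all_algebra.
Set Implicit Arguments. Unset Strict Implicit. Unset Printing Implicit Defensive.
Import GRing.Theory Num.Theory.
Local Open Scope ring_scope.

(* Vertices of the finite simplicial complex are 'I_n; simplices are nonempty
   finite sets of vertices, oriented by the natural order of 'I_n. *)
Definition simplicial_complex (n : nat) (K : {set {set 'I_n}}) : Prop :=
  set0 \notin K /\
  (forall s t : {set 'I_n}, s \in K -> t \subset s -> t != set0 -> t \in K).

(* A bead: (colour, is_bold).  A necklace is a cyclic word of beads,
   represented by a sequence; cyclic words are compared up to rotation. *)
Definition bead n := ('I_n * bool)%type.

Definition cyc_eq (T : Type) (s t : seq T) : Prop := exists k, rot k s = t.

Definition framed_small n (S : {set 'I_n}) (w : seq (bead n)) : Prop :=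
  size w = (2 * #|S|)%N /\
  (forall x, x \in S -> count_mem (x, true) w = 1%N /\ count_mem (x, false) w = 1%N) /\
  rot #|S| (map fst w) = map fst w.

Definition restrict n (t : {set 'I_n}) (w : seq (bead n)) : seq (bead n) :=
  filter (fun b => b.1 \in t) w.

(* A consistent collection of framed small necklaces over the k-skeleton of K.
   (For framed necklaces the inclusion morphisms are unique when they exist,
   so consistency amounts to equality of cyclic words.) *)
Definition consistent_skel n (k : nat) (K : {set {set 'I_n}})
    (N : {set 'I_n} -> seq (bead n)) : Prop :=
  (forall s, s \in K -> (#|s| <= k.+1)%N -> framed_small s (N s)) /\
  (forall s t, s \in K -> (#|s| <= k.+1)%N -> t \in K -> t \subset s ->
     cyc_eq (restrict t (N s)) (N t)).

(* Framed edge necklace ijij (i < j): the bead after the bold i is the bold j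
   iff a([i,j]) = +1. *)
Definition edge_necklace n (e : int) (i j : 'I_n) : seq (bead n) :=
  if e == 1 then [:: (i, true); (j, true); (i, false); (j, false)]
  else [:: (i, true); (j, false); (i, false); (j, true)].

(* 1-cochains are functions on simplices (only values on edges matter). *)
Definition da n (a : {set 'I_n} -> int) (i j k : 'I_n) : int :=
  a [set j; k] - a [set i; k] + a [set i; j].

Definition Fval (z : int) : rat :=
  if z == 3 then 1 / 4
  else if z == -1 then 1 / 4
  else if z == -3 then - (1 / 4)
  else if z == 1 then - (1 / 4)
  else 0.

Definition Fda n (a : {set 'I_n} -> int) (i j k : 'I_n) : rat := Fval (da a i j k).

Definition pm1_cochain n (K : {set {set 'I_n}}) (a : {set 'I_n} -> int) : Prop :=
  forall i j : 'I_n, (i < j)%N -> [set i; j] \in K ->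
    a [set i; j] = 1 \/ a [set i; j] = -1.

Definition Fda_cocycle n (K : {set {set 'I_n}}) (a : {set 'I_n} -> int) : Prop :=
  forall i j k l : 'I_n, (i < j)%N -> (j < k)%N -> (k < l)%N -> [set i; j; k; l] \in K ->
    Fda a j k l - Fda a i k l + Fda a i j l - Fda a i j k = 0.

(* The consistent collection over the 2-skeleton determined by a: framed small
   necklaces, consistent, with the prescribed edge necklaces (the vertex
   necklaces are forced, the triangle ones are the framed small necklaces
   restricting to the edge ones). *)
Definition determined_by2 n (K : {set {set 'I_n}}) (a : {set 'I_n} -> int)
    (N : {set 'I_n} -> seq (bead n)) : Prop :=
  consistent_skel 2 K N /\
  (forall i j : 'I_n, (i < j)%N -> [set i; j] \in K ->
     cyc_eq (N [set i; j]) (edge_necklace (a [set i; j]) i j)).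

Definition extends n (K : {set {set 'I_n}}) (N2 N3 : {set 'I_n} -> seq (bead n)) : Prop :=
  forall s, s \in K -> (#|s| <= 3)%N -> cyc_eq (N3 s) (N2 s).

From mathcomp Require Import all_boot all_order all_algebra.
From mathcomp Require Import zify.
Import Order.TTheory.
Set Implicit Arguments. Unset Strict Implicit. Unset Printing Implicit Defensive.

(* Everything reduces to a single simplex [s] with at most four vertices.  A framed small
   necklace over [s] is [c ++ c'], where [c] lists every vertex once and [c'] is [c] with the
   boldness of each bead flipped; relabelling the vertices of [s] increasingly as
   [0, ..., |s|-1] turns these necklaces into a finite list.  An exhaustive check over all sign
   patterns on the edges then shows that for [|s| <= 4] the edge necklaces determine such a
   necklace up to rotation, and that one exists as soon as [F(da)] satisfies the cocycle
   condition on the 3-faces of [s] (vacuous when [|s| <= 3]).  Existence on every simplex yields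
   the collection over the 3-skeleton: its restrictions to faces are again framed small with the
   prescribed edges, hence agree with the necklaces chosen there.  Uniqueness on every simplex
   yields uniqueness of the extension. *)

Section CyclicEquality.
Variable T : eqType.
Implicit Types s t u : seq T.

Lemma cyc_eq_sym s t : cyc_eq s t -> cyc_eq t s.
Proof. by case=> k <-; exists (size (rot k s) - k); exact: rotK. Qed.

Lemma cyc_eq_trans s t u : cyc_eq s t -> cyc_eq t u -> cyc_eq s u.
Proof.
case=> k <-; case=> l <-.
have [k_le|k_gt] := leqP k (size s); last first.
  by exists l; rewrite (@rot_oversize _ k) // ltnW.
have [l_le|l_gt] := leqP l (size s); last first.
  by exists k; rewrite (@rot_oversize _ l) // size_rot ltnW.
by rewrite rot_add_mod //; eexists.
Qed.

Definition cyc_eqb s t : bool := has (fun k => rot k s == t) (iota 0 (size s).+1).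

Lemma cyc_eqP s t : reflect (cyc_eq s t) (cyc_eqb s t).
Proof.
apply: (iffP hasP) => [[k _ /eqP <-]|[k <-]]; first by exists k.
have [k_le|k_gt] := leqP k (size s).
  by exists k; rewrite ?mem_iota //= ltnS.
by exists 0; rewrite ?mem_iota //= rot0 rot_oversize // ltnW.
Qed.

Lemma drop_rot_half m u : size u = (2 * m)%N -> rot m u = u -> drop m u = take m u.
Proof.
move=> size_u rot_u; apply/eqP.
have : drop m u ++ take m u == take m u ++ drop m u.
  by rewrite -/(rot m u) rot_u cat_take_drop.
rewrite eqseq_cat; first by case/andP.
by rewrite size_drop size_takel size_u; lia.
Qed.

End CyclicEquality.

Lemma cyc_eq_map (T U : eqType) (f : T -> U) s t : cyc_eq s t -> cyc_eq (map f s) (map f t).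
Proof. by case=> k <-; exists k; rewrite map_rot. Qed.

Definition relabel (T U : Type) (f : T -> U) (b : T * bool) : U * bool := (f b.1, b.2).

Definition necklace (T : eqType) (c : seq T) (f : T -> bool) : seq (T * bool) :=
  [seq (x, f x) | x <- c] ++ [seq (x, ~~ f x) | x <- c].

Section Necklaces.
Variable T : eqType.
Implicit Types (c : seq T) (v : seq (T * bool)).

Lemma count_fst v x :
  count_mem x (map fst v) = (count_mem (x, true) v + count_mem (x, false) v)%N.
Proof.
elim: v => //= -[y b] v ->; rewrite !xpair_eqE.
by case: (y == x); case: b => /=; lia.
Qed.

Lemma count_necklace c f x b : count_mem (x, b) (necklace c f) = count_mem x c.
Proof.
rewrite /necklace count_cat !count_map; elim: c => //= y c <-.
by rewrite !xpair_eqE; case: (y == x); case: (f y); case: b => /=; lia.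
Qed.

Lemma fst_necklace c f : map fst (necklace c f) = c ++ c.
Proof. by rewrite map_cat -!map_comp !map_id. Qed.

Lemma map_necklace (U : eqType) (g : T -> U) c f (f' : U -> bool) :
  {in c, forall x, f' (g x) = f x} ->
  map (relabel g) (necklace c f) = necklace (map g c) f'.
Proof.
move=> eq_f; rewrite /necklace map_cat -!map_comp.
by congr (_ ++ _); apply/eq_in_map => x cx; rewrite /relabel /= eq_f.
Qed.

Lemma word_of_uniq_colours v :
  uniq (map fst v) -> v = [seq (x, (x, true) \in v) | x <- map fst v].
Proof.
move=> uniq_v; rewrite -map_comp -{1}[v]map_id.
apply/eq_in_map => -[x b] vxb /=.
case: b vxb => vxb; congr pair; first by rewrite vxb.
apply/esym/negP => vxt.
have := count_fst v x; rewrite !count_uniq_mem ?(map_uniq uniq_v) //.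
by rewrite vxt vxb; case: (x \in _).
Qed.

End Necklaces.

Section FramedSmall.
Variable n : nat.
Implicit Types (s t : {set 'I_n}) (c : seq 'I_n) (w : seq (bead n)).

Lemma framed_small_necklace s c f : perm_eq c (enum s) -> framed_small s (necklace c f).
Proof.
move=> c_s; have size_c : size c = #|s| by rewrite cardE (perm_size c_s).
split; first by rewrite size_cat !size_map size_c; lia.
split; last by rewrite fst_necklace -{1}size_c rot_size_cat.
move=> x sx; rewrite !count_necklace (permP c_s).
by rewrite count_uniq_mem ?enum_uniq ?mem_enum ?sx.
Qed.

Lemma necklace_of_framed_small s w : framed_small s w ->
  exists f, exists2 c, perm_eq c (enum s) & w = necklace c f.
Proof.
case=> size_w [count_w rot_w]; set m := #|s| in size_w rot_w.
set p := take m w; set q := drop m w; set c := map fst p.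
have w_pq : w = p ++ q by rewrite cat_take_drop.
have fst_q : map fst q = c.
  by rewrite /q /c map_drop map_take (drop_rot_half _ rot_w) // size_map.
have count_c x : x \in s -> count_mem x c = 1.
  move=> sx; have [t1 t2] := count_w x sx.
  have := count_fst w x; rewrite t1 t2 w_pq map_cat fst_q count_cat -/c.
  by rewrite addnn -[1 + 1]/(1.*2) => /double_inj.
have size_c : size c = m by rewrite size_map size_takel // size_w; lia.
have s_c : {subset enum s <= c}.
  by move=> x; rewrite mem_enum => sx; rewrite -has_pred1 has_count count_c.
have size_le : size c <= size (enum s) by rewrite size_c -cardE.
have uniq_c : uniq c := leq_size_uniq (enum_uniq s) s_c size_le.
have [_ eq_s_c] := uniq_min_size (enum_uniq s) s_c size_le.
have uniq_q : uniq (map fst q) by rewrite fst_q.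
exists (fun x => (x, true) \in p), c.
  by apply: (uniq_perm uniq_c (enum_uniq s)) => x; rewrite eq_s_c.
rewrite w_pq {1}[p](word_of_uniq_colours uniq_c) {1}[q](word_of_uniq_colours uniq_q) fst_q.
congr (_ ++ _); apply/eq_in_map => x cx; congr pair.
have sx : x \in s by rewrite -mem_enum eq_s_c.
have := (count_w x sx).1; rewrite w_pq count_cat.
rewrite !count_uniq_mem ?(map_uniq uniq_c) ?(map_uniq uniq_q) //.
by case: ((x, true) \in p); case: ((x, true) \in q).
Qed.

Lemma restrict_necklace t c f : restrict t (necklace c f) = necklace [seq x <- c | x \in t] f.
Proof. by rewrite /restrict /necklace filter_cat !filter_map. Qed.

Lemma mem_framed_small s w b : framed_small s w -> b \in w -> b.1 \in s.
Proof.
case/necklace_of_framed_small => f [c c_s ->].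
by rewrite mem_cat => /orP[] /mapP[x cx ->]; rewrite -mem_enum -(perm_mem c_s).
Qed.

Lemma restrict_framed_small s w : framed_small s w -> restrict s w = w.
Proof. by move=> fw; apply/all_filterP/allP => b; apply: mem_framed_small. Qed.

Lemma framed_small_restrict s t w :
  framed_small s w -> t \subset s -> framed_small t (restrict t w).
Proof.
case/necklace_of_framed_small => f [c c_s ->] ts; rewrite restrict_necklace.
apply: framed_small_necklace; apply: perm_trans (perm_filter _ c_s) _.
apply: uniq_perm; [exact: filter_uniq (enum_uniq s) | exact: enum_uniq | move=> x].
by rewrite mem_filter !mem_enum andb_idr // => /(subsetP ts).
Qed.

Lemma restrict_restrict s t w : t \subset s -> restrict t (restrict s w) = restrict t w.
Proof.
move=> ts; rewrite /restrict -filter_predI; apply: eq_filter => b /=.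
by apply/andb_idr => /(subsetP ts).
Qed.

End FramedSmall.

Definition edge_compatible n (a : {set 'I_n} -> int) (s : {set 'I_n}) (w : seq (bead n)) :=
  forall x y : 'I_n, x < y -> x \in s -> y \in s ->
    cyc_eq (restrict [set x; y] w) (edge_necklace (a [set x; y]) x y).

Lemma edge_compatible_restrict n a (s t : {set 'I_n}) w :
  edge_compatible a s w -> t \subset s -> edge_compatible a t (restrict t w).
Proof.
move=> compat_w ts x y xy tx ty.
rewrite restrict_restrict ?subUset ?sub1set ?tx ?ty //.
by apply: compat_w; rewrite ?(subsetP ts).
Qed.

Fixpoint bool_seqs (k : nat) : seq (seq bool) :=
  if k is k'.+1 then [seq b :: l | b <- [:: true; false], l <- bool_seqs k'] else [:: [::]].

Lemma mem_bool_seqs k l : size l = k -> l \in bool_seqs k.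
Proof.
elim: k l => [|k IHk] [|b l] // [size_l].
by apply/allpairsPdep; exists b, l; rewrite IHk //; case: b.
Qed.

Definition small_necklaces (m : nat) : seq (seq (nat * bool)) :=
  [seq necklace c (nth false b) | c <- permutations (iota 0 m), b <- bool_seqs m].

Definition edge_word (e : bool) (i j : nat) : seq (nat * bool) :=
  if e then [:: (i, true); (j, true); (i, false); (j, false)]
  else [:: (i, true); (j, false); (i, false); (j, true)].

Definition edges (m : nat) : seq (nat * nat) := [seq (i, j) | j <- iota 0 m, i <- iota 0 j].

Lemma mem_edges m i j : ((i, j) \in edges m) = (i < j < m).
Proof.
apply/allpairsPdep/andP => [[j' [i' [j'm i'j' [-> ->]]]]|[ij jm]].
  by move: j'm i'j'; rewrite !mem_iota.
by exists j, i; rewrite !mem_iota.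
Qed.

(* A sign pattern [sg] lists the values of a [+1/-1] cochain on the edges of the simplex
   [{0, ..., m-1}], in the order of [edges m], with [true] standing for [+1]. *)
Definition has_edge_signs (m : nat) (sg : seq bool) (u : seq (nat * bool)) : bool :=
  all (fun p => cyc_eqb [seq b <- u | b.1 \in [:: p.1.1; p.1.2]] (edge_word p.2 p.1.1 p.1.2))
      (zip (edges m) sg).

Definition edge_sign (m : nat) (sg : seq bool) (i j : nat) : int :=
  if nth false sg (index (i, j) (edges m)) then 1%R else (-1)%R.

Definition signs_Fda (m : nat) (sg : seq bool) (i j k : nat) : rat :=
  Fval (edge_sign m sg j k - edge_sign m sg i k + edge_sign m sg i j)%R.

Definition cocycle_signs (m : nat) (sg : seq bool) : bool :=
  all (fun l => all (fun k => all (fun j => all (fun i =>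
    signs_Fda m sg j k l - signs_Fda m sg i k l + signs_Fda m sg i j l - signs_Fda m sg i j k
      == 0)%R
    (iota 0 j)) (iota 0 k)) (iota 0 l)) (iota 0 m).

Definition edge_signs_determine (m : nat) : bool :=
  all (fun sg => let M := [seq u <- small_necklaces m | has_edge_signs m sg u] in
                 all (cyc_eqb (head [::] M)) M)
      (bool_seqs (size (edges m))).

Definition cocycle_signs_realized (m : nat) : bool :=
  all (fun sg => cocycle_signs m sg ==> has (has_edge_signs m sg) (small_necklaces m))
      (bool_seqs (size (edges m))).

Lemma edge_signs_determine_le4 m : m <= 4 -> edge_signs_determine m.
Proof.
have : all edge_signs_determine (iota 0 5) by vm_compute.
by move=> /allP all_m m4; apply: all_m; rewrite mem_iota.
Qed.

Lemma cocycle_signs_realized_le4 m : m <= 4 -> cocycle_signs_realized m.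
Proof.
have : all cocycle_signs_realized (iota 0 5) by vm_compute.
by move=> /allP all_m m4; apply: all_m; rewrite mem_iota.
Qed.

Lemma small_necklaces_edge_signs_unique m sg u u' :
  m <= 4 -> size sg = size (edges m) ->
  u \in small_necklaces m -> has_edge_signs m sg u ->
  u' \in small_necklaces m -> has_edge_signs m sg u' -> cyc_eq u u'.
Proof.
move=> m4 /mem_bool_seqs sg_m u_m u_sg u'_m u'_sg.
set M := [seq v <- small_necklaces m | has_edge_signs m sg v].
have head_M v : v \in M -> cyc_eq (head [::] M) v.
  move=> Mv; apply/cyc_eqP.
  by have /allP/(_ sg sg_m)/allP := edge_signs_determine_le4 m4; apply.
apply: cyc_eq_trans (cyc_eq_sym (head_M u _)) (head_M u' _);
  by rewrite mem_filter ?u_sg ?u'_sg.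
Qed.

Lemma small_necklaces_cocycle_signs m sg : m <= 4 -> size sg = size (edges m) ->
  cocycle_signs m sg -> exists2 u, u \in small_necklaces m & has_edge_signs m sg u.
Proof.
move=> m4 /mem_bool_seqs sg_m cocycle_sg; apply/hasP.
by have /allP/(_ sg sg_m)/implyP := cocycle_signs_realized_le4 m4; apply.
Qed.

Lemma sorted_enum_ord n (A : {set 'I_n}) : sorted <%O (enum A).
Proof.
rewrite ltEord /enum_mem; apply: sorted_filter; first exact: ltn_trans.
by rewrite -enumT; have := iota_ltn_sorted 0 n; rewrite -val_enum_ord sorted_map.
Qed.

(* The vertices of [s] are relabelled in increasing order; [x0] is only a default for [nth]. *)
Definition edge_signs n (x0 : 'I_n) (a : {set 'I_n} -> int) (s : {set 'I_n}) : seq bool :=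
  [seq a [set nth x0 (enum s) e.1; nth x0 (enum s) e.2] == 1%R | e <- edges #|s|].

Section Relabel.
Variables (n : nat) (x0 : 'I_n) (s : {set 'I_n}).
Local Notation m := #|s|.
Local Notation g i := (nth x0 (enum s) i).
Local Notation h x := (index x (enum s)).
Local Notation G := (relabel (nth x0 (enum s))).
Local Notation H := (relabel (index^~ (enum s))).

Lemma mem_nth_enum i : i < m -> g i \in s.
Proof. by move=> im; rewrite -mem_enum mem_nth // -cardE. Qed.

Lemma index_enum_lt x : x \in s -> h x < m.
Proof. by rewrite cardE index_mem mem_enum. Qed.

Lemma nth_index_enum x : x \in s -> g (h x) = x.
Proof. by move=> sx; rewrite nth_index ?mem_enum. Qed.

Lemma index_nth_enum i : i < m -> h (g i) = i.
Proof. by move=> im; rewrite index_uniq ?enum_uniq // -cardE. Qed.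

Lemma eq_nth_enum x i : x \in s -> i < m -> (x == g i) = (h x == i).
Proof.
by move=> sx im; apply/eqP/eqP => [->|<-]; rewrite ?index_nth_enum ?nth_index_enum.
Qed.

Lemma ltn_nth_enum i j : i < m -> j < m -> (g i < g j) = (i < j).
Proof.
move=> im jm; have := lt_sorted_ltn_nth x0 (sorted_enum_ord s).
by rewrite ltEord -cardE; apply; rewrite inE.
Qed.

Lemma ltn_index_enum x y : x \in s -> y \in s -> (h x < h y) = (x < y).
Proof.
by move=> sx sy; rewrite -ltn_nth_enum ?index_enum_lt ?nth_index_enum.
Qed.

Lemma map_nth_enum : map (nth x0 (enum s)) (iota 0 m) = enum s.
Proof. by rewrite cardE -/(mkseq _ _) mkseq_nth. Qed.

Lemma map_index_enum : map (index^~ (enum s)) (enum s) = iota 0 m.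
Proof.
rewrite -[X in map _ X]map_nth_enum -map_comp map_id_in // => i.
by rewrite mem_iota => /andP[_ im] /=; rewrite index_nth_enum.
Qed.

Lemma relabel_index_enumK w : framed_small s w -> map G (map H w) = w.
Proof.
move=> fw; rewrite -map_comp map_id_in // => -[x b] xb.
by rewrite /relabel /= nth_index_enum // (mem_framed_small fw xb).
Qed.

Lemma small_necklace_of_framed w : framed_small s w -> map H w \in small_necklaces m.
Proof.
case/necklace_of_framed_small => f [c c_s ->].
have sc x : x \in c -> x \in s by rewrite (perm_mem c_s) mem_enum.
rewrite (map_necklace (f' := nth false (mkseq (f \o nth x0 (enum s)) m))); last first.
  by move=> x cx; rewrite nth_mkseq /= ?nth_index_enum ?index_enum_lt ?sc.
apply: allpairs_f; last by apply: mem_bool_seqs; rewrite size_mkseq.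
by rewrite mem_permutations -map_index_enum; exact: perm_map _ c_s.
Qed.

Lemma small_necklace_colours u b : u \in small_necklaces m -> b \in u -> b.1 < m.
Proof.
case/allpairsP => -[c f] [/=]; rewrite mem_permutations => c_m _ ->.
by rewrite mem_cat => /orP[] /mapP[i + ->]; rewrite (perm_mem c_m) mem_iota.
Qed.

Lemma framed_of_small_necklace u : u \in small_necklaces m -> framed_small s (map G u).
Proof.
case/allpairsP => -[c b] [/=]; rewrite mem_permutations => c_m _ ->.
rewrite (map_necklace (f' := fun x => nth false b (h x))); last first.
  by move=> i; rewrite (perm_mem c_m) mem_iota => /andP[_ im]; rewrite index_nth_enum.
by apply: framed_small_necklace; rewrite -[X in perm_eq _ X]map_nth_enum; apply: perm_map.
Qed.

Variable a : {set 'I_n} -> int.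

Lemma zip_edge_signs :
  zip (edges m) (edge_signs x0 a s) = [seq (e, a [set g e.1; g e.2] == 1%R) | e <- edges m].
Proof. by rewrite /edge_signs -{1}(map_id (edges m)) zip_map. Qed.

Lemma edge_signs_of_compatible w : framed_small s w -> edge_compatible a s w ->
  has_edge_signs m (edge_signs x0 a s) (map H w).
Proof.
move=> fw compat_w; rewrite /has_edge_signs zip_edge_signs all_map.
apply/allP => -[i j]; rewrite mem_edges => /andP[ij jm] /=; have im := ltn_trans ij jm.
have -> : edge_word (a [set g i; g j] == 1%R) i j
          = map H (edge_necklace (a [set g i; g j]) (g i) (g j)).
  by rewrite /edge_necklace /edge_word; case: (_ == 1%R); rewrite /relabel /= !index_nth_enum.
have -> : [seq b <- map H w | b.1 \in [:: i; j]] = map H (restrict [set g i; g j] w).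
  rewrite filter_map /restrict; congr map; apply: eq_in_filter => -[x b] xb /=.
  by rewrite !inE !eq_nth_enum ?(mem_framed_small fw xb).
apply/cyc_eqP/cyc_eq_map/compat_w; rewrite ?ltn_nth_enum //; exact: mem_nth_enum.
Qed.

Lemma compatible_of_edge_signs u : u \in small_necklaces m ->
  has_edge_signs m (edge_signs x0 a s) u -> edge_compatible a s (map G u).
Proof.
move=> u_m u_sg x y xy sx sy.
have -> : edge_necklace (a [set x; y]) x y
          = map G (edge_word (a [set x; y] == 1%R) (h x) (h y)).
  by rewrite /edge_necklace /edge_word; case: (_ == 1%R); rewrite /relabel /= !nth_index_enum.
have -> : restrict [set x; y] (map G u) = map G [seq b <- u | b.1 \in [:: h x; h y]].
  rewrite /restrict filter_map; congr map; apply: eq_in_filter => -[k b] kb /=.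
  have km := small_necklace_colours u_m kb.
  by rewrite !inE ![g k == _]eq_sym !eq_nth_enum // ![k == _]eq_sym.
apply/cyc_eq_map/cyc_eqP; move: u_sg; rewrite /has_edge_signs zip_edge_signs all_map.
move=> /allP/(_ (h x, h y)); rewrite mem_edges ltn_index_enum // xy index_enum_lt //.
by move=> /(_ isT) /=; rewrite !nth_index_enum.
Qed.

End Relabel.

Lemma framed_compatible_unique n a (s : {set 'I_n}) w w' : 0 < #|s| <= 4 ->
  framed_small s w -> edge_compatible a s w ->
  framed_small s w' -> edge_compatible a s w' -> cyc_eq w w'.
Proof.
case/andP => /card_gt0P[x0 _] s4 fw cw fw' cw'.
rewrite -(relabel_index_enumK x0 fw) -(relabel_index_enumK x0 fw'); apply: cyc_eq_map.
apply: (small_necklaces_edge_signs_unique s4 (size_map _ _)).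
- exact: small_necklace_of_framed fw.
- exact: edge_signs_of_compatible fw cw.
- exact: small_necklace_of_framed fw'.
- exact: edge_signs_of_compatible fw' cw'.
Qed.

Lemma card_set2_le2 n (x y : 'I_n) : #|[set x; y]| <= 2.
Proof. by rewrite cards2; case: (_ != _). Qed.

Section Complex.
Variables (n : nat) (K : {set {set 'I_n}}) (a : {set 'I_n} -> int).
Hypotheses (K_complex : simplicial_complex K) (a_pm1 : pm1_cochain K a).
Implicit Types (s t : {set 'I_n}) (i j : nat).

Lemma face_in_complex s t : s \in K -> t \subset s -> t != set0 -> t \in K.
Proof. by case: K_complex => _; apply. Qed.

Lemma pair_in_complex s x y : s \in K -> x \in s -> y \in s -> [set x; y] \in K.
Proof.
move=> sK sx sy; apply: (face_in_complex sK); first by rewrite subUset !sub1set sx sy.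
by apply/set0Pn; exists x; rewrite !inE eqxx.
Qed.

Lemma card_complex_gt0 s : s \in K -> 0 < #|s|.
Proof. by case: K_complex => K0 _ sK; rewrite card_gt0; apply: contraNneq K0 => <-. Qed.

Lemma edge_sign_edge_signs x0 s i j : s \in K -> i < j < #|s| ->
  edge_sign #|s| (edge_signs x0 a s) i j = a [set nth x0 (enum s) i; nth x0 (enum s) j].
Proof.
move=> sK /andP[ij jm]; have ij_edge : (i, j) \in edges #|s| by rewrite mem_edges ij.
rewrite /edge_sign /edge_signs (nth_map (0, 0)) ?index_mem // nth_index //=.
have ltg : nth x0 (enum s) i < nth x0 (enum s) j by rewrite ltn_nth_enum // (ltn_trans ij).
have im := ltn_trans ij jm.
by have [-> | ->] := a_pm1 ltg (pair_in_complex sK (mem_nth_enum _ im) (mem_nth_enum _ jm)).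
Qed.

Lemma cocycle_edge_signs x0 s :
  Fda_cocycle K a -> s \in K -> cocycle_signs #|s| (edge_signs x0 a s).
Proof.
move=> a_cocycle sK.
apply/allP => l; rewrite mem_iota => /andP[_ lm]; apply/allP => k; rewrite mem_iota => /andP[_ kl].
apply/allP => j; rewrite mem_iota => /andP[_ jk]; apply/allP => i; rewrite mem_iota => /andP[_ ij].
rewrite /signs_Fda !edge_sign_edge_signs //; try lia.
apply/eqP; apply: a_cocycle; rewrite ?ltn_nth_enum //; try lia.
apply: (face_in_complex sK); first by rewrite !subUset !sub1set !mem_nth_enum //; lia.
by apply/set0Pn; exists (nth x0 (enum s) i); rewrite !inE eqxx.
Qed.

Lemma framed_compatible_exists s : Fda_cocycle K a -> s \in K -> #|s| <= 4 ->
  exists w, framed_small s w /\ edge_compatible a s w.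
Proof.
move=> a_cocycle sK s4; have /card_gt0P[x0 _] := card_complex_gt0 sK.
have [u u_m u_sg] := small_necklaces_cocycle_signs s4 (size_map _ _)
  (cocycle_edge_signs x0 a_cocycle sK).
exists (map (relabel (nth x0 (enum s))) u).
by split; [apply: framed_of_small_necklace | apply: compatible_of_edge_signs].
Qed.

Definition edge_consistent (N : {set 'I_n} -> seq (bead n)) :=
  forall x y : 'I_n, x < y -> [set x; y] \in K ->
    cyc_eq (N [set x; y]) (edge_necklace (a [set x; y]) x y).

Lemma compatible_of_consistent k N : consistent_skel k K N -> edge_consistent N ->
  forall s, s \in K -> #|s| <= k.+1 -> edge_compatible a s (N s).
Proof.
move=> [_ cons_N] edges_N s sK sk x y xy sx sy.
have xyK := pair_in_complex sK sx sy.
have xy_s : [set x; y] \subset s by rewrite subUset !sub1set sx sy.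
exact: cyc_eq_trans (cons_N _ _ sK sk xyK xy_s) (edges_N _ _ xy xyK).
Qed.

Lemma consistent_cyc_eq k N N' : k <= 3 ->
  consistent_skel k K N -> edge_consistent N -> consistent_skel k K N' -> edge_consistent N' ->
  forall s, s \in K -> #|s| <= k.+1 -> cyc_eq (N s) (N' s).
Proof.
move=> k3 cons_N edges_N cons_N' edges_N' s sK sk.
apply: (framed_compatible_unique _ (cons_N.1 s sK sk)
  (compatible_of_consistent cons_N edges_N sK sk) (cons_N'.1 s sK sk)
  (compatible_of_consistent cons_N' edges_N' sK sk)).
by rewrite card_complex_gt0 // (leq_trans sk).
Qed.

Lemma consistent_family_exists : Fda_cocycle K a ->
  exists2 N, consistent_skel 3 K N & edge_consistent N.
Proof.
move=> a_cocycle.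
have /fin_all_exists[N compat_N] : forall s, exists w : seq (bead n),
    s \in K -> #|s| <= 4 -> framed_small s w /\ edge_compatible a s w.
  move=> s; have [/andP[sK s4]|not_s] := boolP ((s \in K) && (#|s| <= 4)).
    by have [w ?] := framed_compatible_exists a_cocycle sK s4; exists w.
  by exists [::] => sK s4; rewrite sK s4 in not_s.
exists N; last first.
  move=> x y xy xyK.
  have [fN cN] := compat_N _ xyK (leq_trans (card_set2_le2 x y) (isT : 2 <= 4)).
  by rewrite -(restrict_framed_small fN); apply: cN; rewrite ?inE ?eqxx ?orbT.
split=> [s sK s4 | s t sK s4 tK ts]; first exact: (compat_N s sK s4).1.
have [fs cs] := compat_N s sK s4; have t4 := leq_trans (subset_leq_card ts) s4.
have [ft ct] := compat_N t tK t4.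
apply: framed_compatible_unique (framed_small_restrict fs ts)
  (edge_compatible_restrict cs ts) ft ct.
by rewrite card_complex_gt0.
Qed.

Lemma consistent_skel_le k k' N : k' <= k -> consistent_skel k K N -> consistent_skel k' K N.
Proof.
move=> k'k [framed_N cons_N].
have le_k s : #|s| <= k'.+1 -> #|s| <= k.+1 by move/leq_trans; apply.
by split=> [s sK /le_k | s t sK /le_k]; [apply: framed_N | apply: cons_N].
Qed.

Lemma extends_edge_consistent N2 N3 :
  extends K N2 N3 -> edge_consistent N2 -> edge_consistent N3.
Proof.
move=> ext_N3 edges_N2 x y xy xyK.
have xy3 := leq_trans (card_set2_le2 x y) (isT : 2 <= 3).
exact: cyc_eq_trans (ext_N3 _ xyK xy3) (edges_N2 _ _ xy xyK).
Qed.

End Complex.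

Theorem mainTheorem11 (n : nat) (K : {set {set 'I_n}}) (a : {set 'I_n} -> int) :
  simplicial_complex K ->
  pm1_cochain K a ->
  Fda_cocycle K a ->
  (exists N2, determined_by2 K a N2) /\
  (forall N2, determined_by2 K a N2 ->
     (exists N3, consistent_skel 3 K N3 /\ extends K N2 N3) /\
     (forall N3 N3', consistent_skel 3 K N3 -> extends K N2 N3 ->
                     consistent_skel 3 K N3' -> extends K N2 N3' ->
        forall s, s \in K -> (#|s| <= 4)%N -> cyc_eq (N3 s) (N3' s))).
Proof.
move=> K_complex a_pm1 a_cocycle.
have [N cons_N edges_N] := consistent_family_exists K_complex a_pm1 a_cocycle.
have cons2_N := consistent_skel_le (isT : 2 <= 3) cons_N.
split; first by exists N.
move=> N2 [cons_N2 edges_N2]; split.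
  exists N; split=> //.
  exact (consistent_cyc_eq K_complex (isT : 2 <= 3) cons2_N edges_N cons_N2 edges_N2).
move=> N3 N3' cons_N3 ext_N3 cons_N3' ext_N3'.
have edges_N3 := extends_edge_consistent ext_N3 edges_N2.
have edges_N3' := extends_edge_consistent ext_N3' edges_N2.
exact (consistent_cyc_eq K_complex (leqnn 3) cons_N3 edges_N3 cons_N3' edges_N3').
Qed.
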